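(* Let $q,m\in\mathbb{Z}$ and let $g(x,y)=a_0y^m\prod_{i=1}^n(xy^q-a_i)$ be a polynomial with $a_0\in\mathbb{C}\setminus\{0\}$ and $a_1,\dots,a_n\in\mathbb{C}$; its Newton polytope lies on the line $\ell=\{(t,qt+m):t\in\mathbb{R}\}$. Let $h(x,y)\in\mathbb{C}[x,y]$ be a polynomial such that every $(i,j)\in\mathrm{supp}(h)$ satisfies $j>qi+m$. Then there exists $\epsilon_0>0$ such that for every $0<\epsilon<\epsilon_0$ there exists $\delta>0$ such that for every $a\in\mathbb{C}$ with $0<|a|<\delta$ the following holds: if $\xi$ is a non-zero root of $g(x,a)$ of multiplicity $p$, then $g(x,a)+h(x,a)$ has exactly $p$ roots $\xi'$ (counted with multiplicity) satisfying $|\xi'-\xi|\le\epsilon|\xi|$.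
   Context: $\mathrm{supp}(h)$ is the set of exponent pairs $(i,j)$ of monomials $x^iy^j$ with non-zero coefficient in $h$; the Newton polytope is the convex hull of the support. *)

From HB Require Import structures.
From mathcomp Require Import all_boot all_order all_algebra.
Set Implicit Arguments. Unset Strict Implicit. Unset Printing Implicit Defensive.
Import Order.TTheory GRing.Theory Num.Theory.
Local Open Scope ring_scope.

Definition gx (C : numClosedFieldType) (q m : int) (n : nat) (a0 : C)
  (A : 'I_n -> C) (a : C) : {poly C} :=
  (a0 * a ^ m) *: \prod_(i < n) (a ^ q *: 'X - (A i)%:P).

(* A bivariate polynomial h(x,y) is represented as h : {poly {poly C}},
   h = sum_i (h`_i)(y) x^i; so (i,j) in supp h iff (h`_i)`_j != 0.
   hx h a is h(x,a) as a polynomial in x. *)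
Definition hx (C : numClosedFieldType) (h : {poly {poly C}}) (a : C) : {poly C} :=
  \poly_(i < size h) (h`_i).[a].

Definition nroots_in_disk (C : numClosedFieldType) (P : {poly C}) (c r : C)
  (p : nat) : Prop :=
  exists (k : C) (rs : seq C),
    k != 0 /\ P = k *: \prod_(z <- rs) ('X - z%:P) /\
    count (fun z => `|z - c| <= r) rs = p.

From HB Require Import structures.
From mathcomp Require Import all_boot all_order all_algebra.
From mathcomp Require Import ring.
Set Implicit Arguments. Unset Strict Implicit. Unset Printing Implicit Defensive.
Import Order.TTheory GRing.Theory Num.Theory.
Local Open Scope ring_scope.

(* After the substitution w = a^q x, the roots of g(x,a) become
   the fixed points A_i, and h(x,a) = O(|a| |a^m|) uniformly on bounded sets,
   while |g(x,a)| = |a0 a^m| prod_i |w - A_i|.  Fix a root w0 = A_k = a^q xi.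
   For |a| small, every root of g + h lies (in the w-coordinate) either within
   a tiny radius del of some A_i or far away, so the roots of g and of g + h
   are "dichotomous" around w0: each is at distance <= del or >= d from w0.
   On the annulus r <= |w - w0| <= 32 r (del << r << d), |h| < |g| / 2, so
   |g| and |g + h| agree up to a factor 2 there.  Now for a dichotomous
   configuration, moving from |w - w0| = r to |w - w0| = 32 r multiplies the
   distance product by about 32^(number of near points); comparing the two
   products at both radii forces g and g + h to have the same number of
   roots near w0 -- a discrete substitute for Rouche's theorem.  Choosing
   del <= eps |w0| < d, the near zone is exactly the disk |x - xi| <= eps |xi|. *)

Section DistanceProducts.
Context {R : numFieldType}.

Definition dist_prod (rs : seq R) (w : R) : R := \prod_(z <- rs) `|w - z|.

Definition near_count (c rho : R) (rs : seq R) : nat :=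
  count (fun z => `|z - c| <= rho) rs.

Definition dichotomous (c del d : R) (rs : seq R) : Prop :=
  forall z, z \in rs -> `|z - c| <= del \/ d <= `|z - c|.

Lemma bernoulli_ineq (b : R) (k : nat) :
  0 <= b -> b <= 1 -> 1 - k%:R * b <= (1 - b) ^+ k.
Proof.
move=> b0 b1; elim: k => [|k IHk]; first by rewrite mul0r subr0 expr0.
rewrite exprS (le_trans _ (ler_wpM2l _ IHk)) ?subr_ge0 //.
rewrite -subr_ge0 (_ : _ - _ = k%:R * (b * b)) ?mulr_ge0 //.
by rewrite -addn1 natrD; ring.
Qed.

(* One factor of a distance product: moving the observation point from
   distance ra to distance rb of c scales the distance to a near point by about
   rb / ra, and the distance to a far point by about 1. *)
Lemma factor_growth (c wa wb z ra rb del d b : R) :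
  `|wa - c| = ra -> `|wb - c| = rb -> 0 < ra -> 0 <= del -> 0 <= b -> b <= 1 ->
  2 * del <= b * ra -> 2 * del <= b * rb -> ra + rb <= b * d ->
  `|z - c| <= del \/ d <= `|z - c| ->
  (rb / ra) ^+ (`|z - c| <= del)%R * (1 - b) * `|wa - z| <= `|wb - z|.
Proof.
move=> Ha Hb ra0 del0 b0 b1 delra delrb far Hz.
set t := `|z - c|.
have rb0 : 0 <= rb by rewrite -Hb.
have b10 : 0 <= 1 - b by rewrite subr_ge0.
have wa_z : `|wa - z| <= ra + t.
  by rewrite -Ha (_ : wa - z = (wa - c) - (z - c)) ?ler_normB //; ring.
have wb_z1 : rb - t <= `|wb - z|.
  by rewrite -Hb (_ : wb - z = (wb - c) - (z - c)) ?lerB_dist //; ring.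
have wb_z2 : t - rb <= `|wb - z|.
  by rewrite -Hb [`|wb - z|]distrC (_ : z - wb = (z - c) - (wb - c)) ?lerB_dist //; ring.
case: (boolP (t <= del)) => near /=.
- rewrite expr1; apply: le_trans wb_z1.
  apply: (@le_trans _ _ (rb / ra * (1 - b) * (ra + del))).
    rewrite ler_wpM2l ?mulr_ge0 ?invr_ge0 ?(ltW ra0) //; apply: (le_trans wa_z).
    by rewrite lerD2l.
  apply: (@le_trans _ _ (rb - del)); last by rewrite lerD2l lerN2.
  rewrite (_ : _ * _ = rb * (1 - b) * (ra + del) / ra); last by ring.
  rewrite ler_pdivrMr // -subr_ge0 -(pmulr_rge0 _ (ltr0Sn R 1)).
  rewrite (_ : 2 * _ = (b * rb - 2 * del) * ra + (b * ra - 2 * del) * rb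
                       + 2 * (b * rb * del)); last by ring.
  by rewrite !addr_ge0 ?mulr_ge0 ?subr_ge0 // ltW.
- have far_z : d <= t by case: Hz => // H; rewrite H in near.
  rewrite expr0 mul1r; apply: le_trans wb_z2.
  apply: (@le_trans _ _ ((1 - b) * (ra + t))); first by rewrite ler_wpM2l.
  rewrite -subr_ge0 (_ : _ - _ = (b * d - (ra + rb)) + b * (t - d) + b * ra); last by ring.
  have far_d : 0 <= b * d - (ra + rb) by rewrite subr_ge0.
  by rewrite addr_ge0 ?(addr_ge0 far_d) ?mulr_ge0 ?subr_ge0 ?(ltW ra0).
Qed.

Lemma dist_prod_growth (rs : seq R) (c wa wb ra rb del d b : R) :
  `|wa - c| = ra -> `|wb - c| = rb -> 0 < ra -> 0 <= del -> 0 <= b -> b <= 1 ->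
  2 * del <= b * ra -> 2 * del <= b * rb -> ra + rb <= b * d ->
  dichotomous c del d rs ->
  (rb / ra) ^+ near_count c del rs * (1 - b) ^+ size rs * dist_prod rs wa
    <= dist_prod rs wb.
Proof.
move=> Ha Hb ra0 del0 b0 b1 Hra Hrb Hd.
have rho0 : 0 <= rb / ra by rewrite divr_ge0 ?(ltW ra0) // -Hb.
have b10 : 0 <= 1 - b by rewrite subr_ge0.
rewrite /dist_prod /near_count /dichotomous.
elim: rs => [|z rs IH] Hrs; first by rewrite !big_nil /= !expr0 !mulr1.
have Hz := Hrs z (mem_head z rs).
have {}IH := IH (fun y Hy => Hrs y (@mem_behead _ (z :: rs) y Hy)).
rewrite !big_cons /= exprD exprS.
rewrite [leLHS](_ : _ = ((rb / ra) ^+ (`|z - c| <= del)%R * (1 - b) * `|wa - z|)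
   * ((rb / ra) ^+ count (fun z => `|z - c| <= del) rs * (1 - b) ^+ size rs
      * \prod_(y <- rs) `|wa - y|)); last by ring.
apply: ler_pM => //; first by rewrite !mulr_ge0 ?exprn_ge0.
- by rewrite !mulr_ge0 ?exprn_ge0 ?prodr_ge0.
- exact: factor_growth Hz.
Qed.

(* With at most K points and 2 K b <= 1, the loss (1 - b)^size is at most 2. *)
Lemma dist_prod_growth_half (rs : seq R) (c wa wb ra rb del d b : R) (K : nat) :
  `|wa - c| = ra -> `|wb - c| = rb -> 0 < ra -> 0 <= del -> 0 <= b -> b <= 1 ->
  2 * del <= b * ra -> 2 * del <= b * rb -> ra + rb <= b * d ->
  2 * K%:R * b <= 1 -> (size rs <= K)%N -> dichotomous c del d rs ->
  (rb / ra) ^+ near_count c del rs * dist_prod rs wa <= 2 * dist_prod rs wb.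
Proof.
move=> Ha Hb ra0 del0 b0 b1 Hra Hrb Hd HK sK Hrs.
have rho0 : 0 <= rb / ra by rewrite divr_ge0 ?(ltW ra0) // -Hb.
have half : 1 <= 2 * (1 - b) ^+ size rs.
  apply: le_trans _ (ler_wpM2l (ler0n _ 2) (bernoulli_ineq (size rs) b0 b1)).
  rewrite -subr_ge0 (_ : _ - 1 = 1 - 2 * (size rs)%:R * b); last by ring.
  by rewrite subr_ge0 (le_trans _ HK) // ler_wpM2r // ler_wpM2l ?ler_nat.
apply: le_trans _ (ler_wpM2l (ler0n _ 2)
  (dist_prod_growth Ha Hb ra0 del0 b0 b1 Hra Hrb Hd Hrs)).
rewrite [leRHS](_ : _ = (2 * (1 - b) ^+ size rs) * ((rb / ra) ^+ near_count c del rs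
   * dist_prod rs wa)); last by ring.
by rewrite ler_peMl // mulr_ge0 ?exprn_ge0 // prodr_ge0.
Qed.

Lemma dist_prod_ge (rs : seq R) (w e : R) :
  0 <= e -> (forall z, z \in rs -> e <= `|w - z|) -> e ^+ size rs <= dist_prod rs w.
Proof.
rewrite /dist_prod => e0; elim: rs => [|z rs IH] Hrs; first by rewrite big_nil.
rewrite big_cons exprS ler_pM ?exprn_ge0 ?Hrs ?mem_head //.
by apply: IH => y Hy; apply: Hrs; rewrite in_cons Hy orbT.
Qed.

Lemma dist_prod_gt0 (rs : seq R) (c w del d : R) :
  del < `|w - c| -> `|w - c| < d -> dichotomous c del d rs -> 0 < dist_prod rs w.
Proof.
move=> lo hi Hrs; rewrite /dist_prod big_seq prodr_gt0 // => z /Hrs Hz.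
rewrite normr_gt0 subr_eq0; apply/eqP => wz; move: Hz; rewrite -wz.
by case=> H; [move: (lt_le_trans lo H) | move: (lt_le_trans hi H)]; rewrite ltxx.
Qed.

Lemma dist_prod_lower (rs : seq R) (c w r d : R) :
  dichotomous c 0 (2 * d) rs -> 0 <= r -> r <= `|w - c| -> `|w - c| <= d ->
  r ^+ size rs <= dist_prod rs w.
Proof.
move=> D r0 r_w w_d; apply: dist_prod_ge => // z /D [at_c | far].
  by move: at_c; rewrite normr_le0 subr_eq0 => /eqP ->.
have := lerB_dist (z - c) (w - c); rewrite (_ : z - c - (w - c) = z - w); last by ring.
rewrite [`|z - w|]distrC; apply: le_trans; apply: le_trans (le_trans r_w w_d) _.
rewrite -subr_ge0 (_ : _ - d = (`|z - c| - 2 * d) + (d - `|w - c|)); last by ring.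
by rewrite addr_ge0 ?subr_ge0.
Qed.

Lemma dichotomous_weaken (rs : seq R) (c del del' d d' : R) :
  del <= del' -> d' <= d -> dichotomous c del d rs -> dichotomous c del' d' rs.
Proof.
move=> del_le d_le D z /D [near | far]; first by left; apply: le_trans del_le.
by right; apply: le_trans far.
Qed.

Lemma near_count_radius (rs : seq R) (c del rho d : R) :
  dichotomous c del d rs -> del <= rho -> rho < d ->
  count (fun z => `|z - c| <= rho) rs = near_count c del rs.
Proof.
move=> D del_rho rho_d; apply: eq_in_count => z /D [near | far].
  by rewrite near (le_trans near del_rho).
have rho_z : rho < `|z - c| := lt_le_trans rho_d far.
by rewrite (lt_geF rho_z) (lt_geF (le_lt_trans del_rho rho_z)).
Qed.

(* 32 exceeds the factor 16 lost in the comparison below. *)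
Lemma exp32_le (c1 c2 : nat) : (32 : R) ^+ c1 <= 16 * 32 ^+ c2 -> (c1 <= c2)%N.
Proof.
move=> H; rewrite leqNgt; apply/negP => lt21.
have : 32 * 32 ^+ c2 <= 16 * (32 : R) ^+ c2.
  by apply: le_trans H; rewrite -exprS ler_eXn2l // ltr1n.
by rewrite ler_pM2r ?exprn_gt0 // ler_nat.
Qed.

(* Counting rigidity, one inequality: compare the growth of both weighted
   distance products between the radii r and 32 r. *)
Lemma near_count_le (rs1 rs2 : seq R) (c k1 k2 r del d b : R) (K : nat) :
  0 < r -> 0 <= del -> 0 < b -> b <= 1 -> 2 * del <= b * r -> 33 * r <= b * d ->
  2 * K%:R * b <= 1 -> (size rs1 <= K)%N -> (size rs2 <= K)%N ->
  dichotomous c del d rs1 -> dichotomous c del d rs2 -> 0 < k1 -> 0 < k2 ->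
  (forall w, r <= `|w - c| <= 32 * r ->
     k1 * dist_prod rs1 w <= 2 * (k2 * dist_prod rs2 w) /\
     k2 * dist_prod rs2 w <= 2 * (k1 * dist_prod rs1 w)) ->
  (near_count c del rs1 <= near_count c del rs2)%N.
Proof.
move=> r0 del0 /[dup] b0' /ltW b0 b1 Hr Hd HK s1 s2 D1 D2 k10 k20 cmp.
set c1 := near_count c del rs1; set c2 := near_count c del rs2.
set w1 := c + r; set w2 := c + 32 * r.
have r32 : 0 < 32 * r by rewrite mulr_gt0.
have n1 : `|w1 - c| = r by rewrite /w1 addrC addKr ger0_norm // ltW.
have n2 : `|w2 - c| = 32 * r by rewrite /w2 addrC addKr ger0_norm // ltW.
have r_32r : r <= 32 * r by rewrite ler_peMl ?ler1n // ltW.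
have H32r : 2 * del <= b * (32 * r) by apply: le_trans Hr _; rewrite ler_wpM2l.
have far : r + 32 * r <= b * d by rewrite (_ : r + 32 * r = 33 * r) //; ring.
have far' : 32 * r + r <= b * d by rewrite addrC.
have := dist_prod_growth_half n1 n2 r0 del0 b0 b1 Hr H32r far HK s1 D1.
rewrite mulfK ?gt_eqF // -/c1 => G1.
have := dist_prod_growth_half n2 n1 r32 del0 b0 b1 H32r Hr far' HK s2 D2.
rewrite invfM mulrCA mulfV ?gt_eqF // mulr1 -/c2 => G2.
have {}G2 : dist_prod rs2 w2 <= 32 ^+ c2 * 2 * dist_prod rs2 w1.
  have := ler_wpM2l (exprn_ge0 c2 (ler0n R 32)) G2.
  by rewrite !mulrA -exprMn mulfV ?pnatr_eq0 // expr1n mul1r.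
have in1 : r <= `|w1 - c| <= 32 * r by rewrite n1 lexx r_32r.
have in2 : r <= `|w2 - c| <= 32 * r by rewrite n2 lexx r_32r.
have [[_ C2] [C1 _]] := (cmp w1 in1, cmp w2 in2).
have del_r : del < r.
  rewrite -(ltr_pM2l (ltr0Sn R 1)).
  apply: le_lt_trans (le_trans Hr (ler_piMl (ltW r0) b1)) _.
  by rewrite ltr_pMl // ltr1n.
have r_33r : r < 33 * r by rewrite ltr_pMl // ltr1n.
have d0 : 0 < d by rewrite -(pmulr_rgt0 _ b0') (lt_le_trans _ Hd) // (lt_trans r0).
have r_d : r < d by apply: lt_le_trans r_33r (le_trans Hd (ler_piMl (ltW d0) b1)).
have P1 : 0 < dist_prod rs1 w1 by apply: dist_prod_gt0 D1; rewrite n1.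
apply: exp32_le; rewrite -(ler_pM2l (mulr_gt0 k10 P1)).
apply: (@le_trans _ _ (2 * (k1 * dist_prod rs1 w2))).
  rewrite [leLHS](_ : _ = k1 * (32 ^+ c1 * dist_prod rs1 w1)); last by ring.
  by rewrite [leRHS]mulrCA ler_wpM2l // ltW.
apply: (@le_trans _ _ (2 * (2 * (k2 * dist_prod rs2 w2)))); first by rewrite ler_wpM2l.
apply: (@le_trans _ _ (8 * 32 ^+ c2 * (k2 * dist_prod rs2 w1))).
  rewrite [leRHS](_ : _ = 2 * (2 * (k2 * (32 ^+ c2 * 2 * dist_prod rs2 w1)))); last by ring.
  by rewrite !ler_wpM2l // ltW.
rewrite [leRHS](_ : _ = 8 * 32 ^+ c2 * (2 * (k1 * dist_prod rs1 w1))); last by ring.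
by rewrite ler_wpM2l ?mulr_ge0 ?exprn_ge0.
Qed.

Lemma near_count_eq (rs1 rs2 : seq R) (c k1 k2 r del d b : R) (K : nat) :
  0 < r -> 0 <= del -> 0 < b -> b <= 1 -> 2 * del <= b * r -> 33 * r <= b * d ->
  2 * K%:R * b <= 1 -> (size rs1 <= K)%N -> (size rs2 <= K)%N ->
  dichotomous c del d rs1 -> dichotomous c del d rs2 -> 0 < k1 -> 0 < k2 ->
  (forall w, r <= `|w - c| <= 32 * r ->
     k1 * dist_prod rs1 w <= 2 * (k2 * dist_prod rs2 w) /\
     k2 * dist_prod rs2 w <= 2 * (k1 * dist_prod rs1 w)) ->
  near_count c del rs1 = near_count c del rs2.
Proof.
move=> r0 del0 b0 b1 Hr Hd HK s1 s2 D1 D2 k10 k20 cmp.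
apply/eqP; rewrite eqn_leq (near_count_le r0 del0 b0 b1 Hr Hd HK s1 s2 D1 D2 k10 k20 cmp).
apply: (near_count_le r0 del0 b0 b1 Hr Hd HK s2 s1 D2 D1 k20 k10) => w /cmp [].
by split.
Qed.

End DistanceProducts.

Section NormBounds.
Context {R : numFieldType}.

(* Finitely many positive quantities have a common positive lower bound
   (taken <= 1): the product of the x / (1 + x). *)
Lemma finite_lower_bound (I : finType) (P : pred I) (F : I -> R) :
  (forall i, P i -> 0 < F i) ->
  exists e, [/\ 0 < e, e <= 1 & forall i, P i -> e <= F i].
Proof.
move=> F0; pose fr (x : R) := x / (1 + x).
have fr_bounds (x : R) : 0 < x -> [/\ 0 < fr x, fr x <= 1 & fr x <= x].
  move=> x0; have x10 : 0 < 1 + x := addr_gt0 ltr01 x0.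
  rewrite /fr divr_gt0 // !ler_pdivrMr // mul1r lerDr ler_peMr ?ltW //.
  by rewrite ltrDl.
exists (\prod_(i | P i) fr (F i)); split.
- by apply: prodr_gt0 => i /F0 /fr_bounds [].
- apply: prodr_ile1 => i Pi.
  by have [/ltW -> -> _] := fr_bounds _ (F0 i Pi).
- move=> i Pi; have [fr0 fr1 frF] := fr_bounds _ (F0 i Pi).
  apply: le_trans frF; rewrite (bigD1 i) //= ler_piMr ?(ltW fr0) //.
  apply: prodr_ile1 => j /andP [Pj _].
  by have [/ltW -> -> _] := fr_bounds _ (F0 j Pj).
Qed.

Lemma pos_min2 (x y : R) : 0 < x -> 0 < y -> exists z, [/\ 0 < z, z <= x & z <= y].
Proof.
move=> x0 y0; have [z [z0 _ zxy]] : exists z, [/\ 0 < z, z <= 1 &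
    forall t : bool, predT t -> z <= if t then x else y].
  by apply: finite_lower_bound => -[].
by exists z; split=> //; [exact: zxy true isT | exact: zxy false isT].
Qed.

Lemma separation_bound (I : finType) (A : I -> R) :
  exists d, [/\ 0 < d, d <= 1 & forall i j, A i != A j -> 2 * d <= `|A i - A j|].
Proof.
have [e [e0 e1 eA]] : exists e, [/\ 0 < e, e <= 1 &
    forall ij : I * I, A ij.1 != A ij.2 -> e <= `|A ij.1 - A ij.2|].
  by apply: finite_lower_bound => ij; rewrite normr_gt0 subr_eq0.
exists (e / 2); split; first by rewrite divr_gt0.
  by rewrite ler_pdivrMr // mul1r (le_trans e1) ?ler1n.
by move=> i j Aij; rewrite mulrC divfK ?pnatr_eq0 // (eA (i, j)).
Qed.

(* The value of a split polynomial is a weighted distance product; the roots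
   are rescaled by s to match a change of variable w = s x. *)
Lemma split_poly_norm (p : {poly R}) (k s x : R) (rs : seq R) :
  s != 0 -> p = k *: \prod_(z <- rs) ('X - z%:P) ->
  `|p.[x]| = `|k| / `|s| ^+ size rs * dist_prod [seq s * z | z <- rs] (s * x).
Proof.
move=> s0 ->; rewrite hornerZ horner_prod normrM normr_prod /dist_prod big_map.
have {}s0 : `|s| ^+ size rs != 0 by rewrite expf_neq0 // normr_eq0.
rewrite -mulrA; congr (_ * _); apply: (mulfI s0); rewrite mulrA mulfV // mul1r.
elim: rs {s0} => [|z rs IH]; first by rewrite !big_nil expr0 mul1r.
by rewrite !big_cons /= exprS -IH hornerXsubC -mulrBr normrM; ring.
Qed.

Lemma count_disk_scale (rs : seq R) (s x e : R) : s != 0 ->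
  count (fun z => `|z - x| <= e * `|x|) rs =
  count (fun w => `|w - s * x| <= e * `|s * x|) [seq s * z | z <- rs].
Proof.
move=> s0; rewrite count_map; apply: eq_count => z /=.
by rewrite -mulrBr !normrM mulrCA ler_pM2l // normr_gt0.
Qed.

Lemma perturbation_comparable (u e : R) :
  2 * `|e| <= `|u| -> `|u + e| <= 2 * `|u| /\ `|u| <= 2 * `|u + e|.
Proof.
move=> small; split.
  apply: le_trans (ler_normD _ _) _; rewrite mulr2n mulrDl mul1r lerD2l.
  by apply: le_trans small; rewrite ler_peMl ?ler1n.
have := lerB_normD u e; rewrite -(ler_pM2l (ltr0Sn R 1)) => H.
apply: le_trans H; rewrite mulrBr -subr_ge0.
rewrite (_ : _ - _ = `|u| - 2 * `|e|); by [rewrite subr_ge0 | ring].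
Qed.

Lemma poly_neq0_dominated (p e : {poly R}) (x : R) :
  2 * `|e.[x]| < `|p.[x]| -> p + e != 0.
Proof.
move=> dom; have [_ pe] := perturbation_comparable (ltW dom).
have : 0 < 2 * `|(p + e).[x]|.
  by rewrite hornerD; apply: lt_le_trans pe; apply: le_lt_trans dom; rewrite mulr_ge0.
by rewrite pmulr_rgt0 // normr_gt0; apply: contra => /eqP ->; rewrite horner0.
Qed.

End NormBounds.

Section Perturbation.
Variables (C : numClosedFieldType) (q m : int) (n : nat) (a0 : C) (A : 'I_n -> C).
Variable h : {poly {poly C}}.
Hypothesis a0_neq0 : a0 != 0.
Hypothesis h_above : forall i j : nat, (h`_i)`_j != 0 -> q * (i%:Z) + m < j%:Z.

(* The roots of g in the coordinate w = a^q x. *)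
Definition Aseq : seq C := [seq A i | i <- index_enum 'I_n].

Lemma size_Aseq : size Aseq = n.
Proof. by rewrite size_map [index_enum _]unlock -enumT size_enum_ord. Qed.

Lemma Aseq_configuration : exists d R amin,
  [/\ 0 < d, d <= 1, 0 < R, 0 < amin & forall k, [/\ dichotomous (A k) 0 (2 * d) Aseq,
     `|A k| + 1 <= R & A k != 0 -> amin <= `|A k|]].
Proof.
have [d [d0 d1 sepA]] := separation_bound A.
have [amin [amin0 _ aminA]] :
    exists amin, [/\ 0 < amin, amin <= 1 & forall i, A i != 0 -> amin <= `|A i|].
  by apply: finite_lower_bound => i; rewrite normr_gt0.
exists d, (1 + \sum_(i < n) `|A i|), amin; split=> //.
  by rewrite (lt_le_trans ltr01) // lerDl sumr_ge0.
move=> k; split; last exact: aminA.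
  move=> _ /mapP [j _ ->]; have [->|Ajk] := eqVneq (A j) (A k).
    by left; rewrite subrr normr0.
  by right; exact: sepA.
by rewrite addrC lerD2l (bigD1 k) //= lerDl sumr_ge0.
Qed.

Lemma count_eq_near (al d del : C) :
  dichotomous al 0 d Aseq -> 0 <= del -> del < d ->
  count (fun i => A i == al) (index_enum 'I_n) = near_count al del Aseq.
Proof.
move=> DA del0 del_d; rewrite /near_count (near_count_radius DA del0 del_d).
by rewrite /near_count count_map; apply: eq_count => i /=; rewrite normr_le0 subr_eq0.
Qed.

(* The weighted coefficient norm of h bounding h(x, a) when |a^q x| <= R. *)
Definition hnorm (R : C) : C :=
  \sum_(i < size h) \sum_(j < size h`_i) `|(h`_i)`_j| * R ^+ i.

Lemma hnorm_ge0 (R : C) : 0 <= R -> 0 <= hnorm R.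
Proof.
by move=> R0; do 2!apply: sumr_ge0 => ? _; rewrite mulr_ge0 ?exprn_ge0.
Qed.

Variable a : C.
Hypothesis a_neq0 : a != 0.

Local Notation g := (gx q m a0 A a).
Local Notation P := (gx q m a0 A a + hx h a).

Lemma aq_neq0 : a ^ q != 0.
Proof. by rewrite expfz_neq0. Qed.

Lemma gx_norm (x : C) : `|g.[x]| = `|a0 * a ^ m| * dist_prod Aseq (a ^ q * x).
Proof.
rewrite /gx hornerZ horner_prod normrM normr_prod /dist_prod big_map.
by congr (_ * _); apply: eq_bigr => i _; rewrite !hornerE.
Qed.

Lemma gx_factor :
  g = (a0 * a ^ m * (a ^ q) ^+ n) *:
      \prod_(z <- [seq A i / a ^ q | i <- index_enum 'I_n]) ('X - z%:P).
Proof.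
rewrite /gx big_map.
rewrite (eq_bigr (fun i => a ^ q *: ('X - (A i / a ^ q)%:P))); last first.
  by move=> i _; rewrite scalerBr scale_polyC mulrC divfK ?aq_neq0.
by rewrite scaler_prodl card_ord scalerA.
Qed.

Lemma gx_lead_neq0 : a0 * a ^ m * (a ^ q) ^+ n != 0.
Proof. by rewrite !mulf_neq0 ?expfz_neq0 ?expf_neq0 ?aq_neq0. Qed.

Lemma mup_gx (xi : C) :
  mup xi g = count (fun i => A i == a ^ q * xi) (index_enum 'I_n).
Proof.
rewrite gx_factor -mul_polyC mupMr; last by rewrite rootC gx_lead_neq0.
rewrite mu_prod_XsubC count_map; apply: eq_count => i /=.
by rewrite -(inj_eq (mulfI aq_neq0)) mulrC divfK ?aq_neq0 // eq_sym mulrC.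
Qed.

Lemma size_gx : size g = n.+1.
Proof.
rewrite gx_factor size_scale ?gx_lead_neq0 // size_prod_XsubC size_map.
by rewrite [index_enum _]unlock -enumT size_enum_ord.
Qed.

Lemma root_gx (xi : C) : root g xi -> exists k, A k = a ^ q * xi.
Proof.
rewrite /root -normr_eq0 gx_norm mulf_eq0 normr_eq0 mulf_eq0 (negbTE a0_neq0).
rewrite expfz_eq0 (negbTE a_neq0) andbF /= /dist_prod big_map => /prodf_eq0 [k _].
by rewrite normr_eq0 subr_eq0 => /eqP ->; exists k.
Qed.

Hypothesis a_le1 : `|a| <= 1.

(* Since the support of h lies strictly above the line j = q i + m, every
   monomial of h(x, a) is O(|a^m| |a|) for |a^q x| bounded. *)
Lemma hx_bound (x R : C) : `|a ^ q * x| <= R ->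
  `|(hx h a).[x]| <= `|a ^ m| * `|a| * hnorm R.
Proof.
move=> xR; rewrite /hx horner_poly.
apply: le_trans (ler_norm_sum _ _ _) _.
rewrite /hnorm mulr_sumr; apply: ler_sum => i _.
rewrite horner_coef mulr_suml mulr_sumr.
apply: le_trans (ler_norm_sum _ _ _) _; apply: ler_sum => j _.
have R0 : 0 <= R := le_trans (normr_ge0 _) xR.
case: (eqVneq ((h`_i)`_j) 0) => [->|hij].
  by rewrite !mul0r normr0 !mulr_ge0 ?exprn_ge0.
have [k ek] : exists k : nat, j%:Z - (q * i%:Z + m) = k.+1%:Z.
  have : 0 < j%:Z - (q * i%:Z + m) by rewrite subr_gt0 h_above.
  by case: (j%:Z - (q * i%:Z + m)) => [[|k]|k] // _; exists k.
have split_power : a ^+ j * x ^+ i = a ^ m * a ^+ k.+1 * (a ^ q * x) ^+ i.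
  rewrite exprMn mulrA; congr (_ * _).
  rewrite !exprnP exprz_exp -!expfzDr //; congr (a ^ _).
  by rewrite -ek; ring.
rewrite -mulrA split_power !normrM !normrX.
rewrite [leRHS](_ : _ = `|(h`_i)`_j| * (`|a ^ m| * `|a| * R ^+ i)); last by ring.
rewrite ler_wpM2l //; apply: ler_pM; rewrite ?mulr_ge0 ?exprn_ge0 //.
  by rewrite ler_wpM2l // -[leRHS]expr1 ler_wiXn2l.
by rewrite lerXn2r ?nnegrE.
Qed.

Lemma h_dominated (x R del : C) : 0 <= del ->
  2 * `|a| * hnorm R < `|a0| * del ^+ n ->
  `|a ^ q * x| <= R -> del ^+ n <= dist_prod Aseq (a ^ q * x) ->
  2 * `|(hx h a).[x]| < `|g.[x]|.
Proof.
move=> del0 small xR far.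
have am0 : 0 < `|a ^ m| by rewrite normr_gt0 expfz_neq0.
apply: le_lt_trans (ler_wpM2l (ler0n _ 2) (hx_bound xR)) _.
rewrite gx_norm normrM.
rewrite [ltLHS](_ : _ = `|a ^ m| * (2 * `|a| * hnorm R)); last by ring.
rewrite [ltRHS](_ : _ = `|a ^ m| * (`|a0| * dist_prod Aseq (a ^ q * x))); last by ring.
by rewrite ltr_pM2l //; apply: lt_le_trans small _; rewrite ler_wpM2l.
Qed.

Lemma root_close_to_A (z R del : C) : 0 <= del ->
  2 * `|a| * hnorm R < `|a0| * del ^+ n ->
  root P z -> `|a ^ q * z| <= R -> exists2 v, v \in Aseq & `|a ^ q * z - v| < del.
Proof.
move=> del0 small Pz zR.
have gh : `|g.[z]| = `|(hx h a).[z]|.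
  by move: Pz; rewrite /root hornerD addr_eq0 => /eqP ->; rewrite normrN.
have [/hasP //|/hasPn far] := boolP (has (fun v => `|a ^ q * z - v| < del) Aseq).
have all_far : del ^+ n <= dist_prod Aseq (a ^ q * z).
  rewrite -size_Aseq; apply: dist_prod_ge => // v /far.
  by rewrite real_leNgt ?ger0_real.
have := h_dominated del0 small zR all_far; rewrite gh -subr_lt0.
by rewrite (_ : _ - _ = `|(hx h a).[z]|) ?normr_lt0 //; ring.
Qed.

Lemma size_perturbed_roots (k : C) (rs : seq C) :
  P != 0 -> P = k *: \prod_(z <- rs) ('X - z%:P) -> (size rs <= n + size h)%N.
Proof.
move=> P0 Prs; have k0 : k != 0 by apply: contra P0; rewrite Prs => /eqP ->; rewrite scale0r.
have sP : size P = (size rs).+1 by rewrite {1}Prs size_scale // size_prod_XsubC.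
have hx_h : (size (hx h a) <= size h)%N by apply: size_poly.
have := size_polyD g (hx h a); rewrite sP size_gx leq_max !ltnS.
case/orP=> [rs_n | /leq_trans/(_ hx_h) rs_h]; first exact: leq_trans rs_n (leq_addr _ _).
exact: leq_trans (ltnW rs_h) (leq_addl _ _).
Qed.

Lemma perturbed_roots_dichotomous (z al d del R : C) :
  0 <= del -> del <= d -> d <= 1 -> `|al| + 1 <= R ->
  2 * `|a| * hnorm R < `|a0| * del ^+ n -> dichotomous al 0 (2 * d) Aseq ->
  root P z -> `|a ^ q * z - al| <= del \/ d <= `|a ^ q * z - al|.
Proof.
move=> del0 del_d d1 alR small DA Pz; set w := a ^ q * z.
have R0 : 0 <= R by apply: le_trans alR; rewrite addr_ge0.
case/orP: (real_leVge (normr_real w) (ger0_real R0)) => [wR | Rw].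
  have [v Av close] := root_close_to_A del0 small Pz wR.
  case: (DA v Av) => [v_al | v_far].
    by move: v_al close; rewrite normr_le0 subr_eq0 => /eqP -> /ltW; left.
  right; have := lerB_dist (v - al) (v - w).
  rewrite (_ : v - al - (v - w) = w - al); last by ring.
  apply: le_trans; rewrite [`|v - w|]distrC -subr_ge0.
  rewrite (_ : _ - d = (`|v - al| - 2 * d) + (d - del) + (del - `|w - v|)); last by ring.
  have e1 : 0 <= `|v - al| - 2 * d by rewrite subr_ge0.
  have e3 : 0 <= del - `|w - v| by rewrite subr_ge0 ltW.
  by rewrite addr_ge0 // addr_ge0 // subr_ge0.
right; apply: le_trans d1 (le_trans _ (lerB_dist w al)).
rewrite -subr_ge0 (_ : _ - 1 = (`|w| - R) + (R - (`|al| + 1))); last by ring.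
by rewrite addr_ge0 ?subr_ge0.
Qed.

Lemma g_dominates_annulus (w al r d del R : C) :
  0 <= del -> del <= r -> d <= 1 -> `|al| + 1 <= R ->
  2 * `|a| * hnorm R < `|a0| * del ^+ n -> dichotomous al 0 (2 * d) Aseq ->
  r <= `|w - al| -> `|w - al| <= d ->
  2 * `|(hx h a).[w / a ^ q]| < `|g.[w / a ^ q]|.
Proof.
move=> del0 del_r d1 alR small DA rw wd.
have w_eq : a ^ q * (w / a ^ q) = w by rewrite mulrC divfK ?aq_neq0.
have w_R : `|w| <= R.
  apply: le_trans alR; have := ler_normD al (w - al).
  rewrite (_ : al + (w - al) = w); last by ring.
  by move/le_trans; apply; rewrite lerD2l (le_trans wd).
have far : del ^+ n <= dist_prod Aseq w.
  apply: le_trans (dist_prod_lower DA (le_trans del0 del_r) rw wd).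
  by rewrite size_Aseq lerXn2r ?nnegrE // (le_trans del0).
by apply: h_dominated del0 small _ _; rewrite w_eq.
Qed.

Lemma perturbed_root_count (xi d b r del R eps : C) (K : nat) :
  dichotomous (a ^ q * xi) 0 (2 * d) Aseq -> d <= 1 -> `|a ^ q * xi| + 1 <= R ->
  0 < r -> 0 <= del -> 0 < b -> b <= 1 -> 2 * del <= b * r -> 33 * r <= b * d ->
  2 * K%:R * b <= 1 -> (n + size h <= K)%N ->
  del <= eps * `|a ^ q * xi| -> eps * `|a ^ q * xi| < d ->
  2 * `|a| * hnorm R < `|a0| * del ^+ n ->
  nroots_in_disk P xi (eps * `|xi|)
    (count (fun i => A i == a ^ q * xi) (index_enum 'I_n)).
Proof.
move=> DA d1 alR r0 del0 b0 b1 Hr Hd HK HnK del_eps eps_d small.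
set al := a ^ q * xi.
have del_d : del < d := le_lt_trans del_eps eps_d.
have d0 : 0 < d := le_lt_trans del0 del_d.
have d_2d : d <= 2 * d by rewrite ler_peMl ?ler1n // ltW.
have del_r : del <= r.
  apply: le_trans (_ : 2 * del <= r); first by rewrite ler_peMl ?ler1n.
  exact: le_trans Hr (ler_piMl (ltW r0) b1).
have d32r : 32 * r <= d.
  apply: le_trans (le_trans Hd (ler_piMl (ltW d0) b1)).
  by rewrite ler_wpM2r ?ler_nat ?ltW.
have dom w : r <= `|w - al| <= 32 * r ->
    2 * `|(hx h a).[w / a ^ q]| < `|g.[w / a ^ q]|.
  case/andP => rw wr.
  exact: g_dominates_annulus del0 del_r d1 alR small DA rw (le_trans wr d32r).
have P0 : P != 0.
  apply: (poly_neq0_dominated (x := (al + r) / a ^ q)); apply: dom.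
  rewrite addrC addKr ger0_norm ?(ltW r0) // lexx /=.
  by rewrite ler_peMl ?ler1n ?(ltW r0).
have [rs Prs] := closed_field_poly_normal P.
set ws := [seq a ^ q * z | z <- rs].
have Dws : dichotomous al del d ws.
  move=> _ /mapP [z zr ->].
  have Pz : root P z by rewrite Prs rootZ ?lead_coef_eq0 // root_prod_XsubC.
  exact: perturbed_roots_dichotomous del0 (ltW del_d) d1 alR small DA Pz.
have size_ws : (size ws <= K)%N.
  by rewrite size_map (leq_trans _ HnK) // (size_perturbed_roots P0 Prs).
have size_A : (size Aseq <= K)%N by rewrite size_Aseq (leq_trans _ HnK) ?leq_addr.
have k1 : 0 < `|a0 * a ^ m| by rewrite normr_gt0 mulf_neq0 ?expfz_neq0.
have k2 : 0 < `|lead_coef P| / `|a ^ q| ^+ size rs.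
  by rewrite divr_gt0 ?exprn_gt0 // normr_gt0 ?aq_neq0 // lead_coef_eq0.
have DA' : dichotomous al del d Aseq := dichotomous_weaken del0 d_2d DA.
have counts_eq : near_count al del Aseq = near_count al del ws.
  apply: (near_count_eq r0 del0 b0 b1 Hr Hd HK size_A size_ws DA' Dws k1 k2).
  move=> w /dom /ltW /perturbation_comparable.
  have w_eq : a ^ q * (w / a ^ q) = w by rewrite mulrC divfK ?aq_neq0.
  by rewrite -hornerD gx_norm (split_poly_norm _ aq_neq0 Prs) w_eq => -[].
exists (lead_coef P), rs; split; first by rewrite lead_coef_eq0.
split=> //.
rewrite (count_disk_scale _ _ _ aq_neq0) (near_count_radius Dws del_eps eps_d).
by rewrite -counts_eq (count_eq_near (dichotomous_weaken (lexx 0) d_2d DA) del0 del_d).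
Qed.

Lemma perturbed_root_count_small (xi d del R eps : C) :
  dichotomous (a ^ q * xi) 0 (2 * d) Aseq -> d <= 1 -> `|a ^ q * xi| + 1 <= R ->
  0 <= del -> 264 * ((n + size h).+1)%:R ^+ 2 * del <= d ->
  del <= eps * `|a ^ q * xi| -> eps * `|a ^ q * xi| < d ->
  2 * `|a| * hnorm R < `|a0| * del ^+ n ->
  nroots_in_disk P xi (eps * `|xi|)
    (count (fun i => A i == a ^ q * xi) (index_enum 'I_n)).
Proof.
move=> DA d1 alR del0 del_d del_eps eps_d small.
have d0 : 0 < d := le_lt_trans del0 (le_lt_trans del_eps eps_d).
set K := (n + size h).+1 in del_d *; have K0 : 0 < K%:R :> C by rewrite ltr0n.
pose b : C := (2 * K%:R)^-1; pose r := b * d / 33.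
have b0 : 0 < b by rewrite invr_gt0 mulr_gt0.
apply: (@perturbed_root_count xi d b r del R eps K) => //.
- by rewrite /r divr_gt0 ?mulr_gt0 ?ltr0n.
- by rewrite invf_le1 ?mulr_gt0 // -natrM ler1n muln_gt0.
- have K2 : 0 < 132 * K%:R ^+ 2 :> C by rewrite mulr_gt0 ?exprn_gt0.
  rewrite (_ : b * r = d / (132 * K%:R ^+ 2)); last by rewrite /r /b; field; rewrite pnatr_eq0.
  by rewrite ler_pdivlMr // (le_trans _ del_d) // -subr_ge0 (_ : _ - _ = 0) //; ring.
- by rewrite /r mulrC divfK ?pnatr_eq0.
- by rewrite /b mulfV ?gt_eqF ?mulr_gt0.
Qed.

End Perturbation.

Theorem lemma5p2 (C : numClosedFieldType) (q m : int) (n : nat) (a0 : C)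
    (A : 'I_n -> C) (h : {poly {poly C}}) :
  a0 != 0 ->
  (forall i j : nat, (h`_i)`_j != 0 -> q * (i%:Z) + m < j%:Z) ->
  exists eps0 : C, 0 < eps0 /\
    forall eps : C, 0 < eps -> eps < eps0 ->
      exists delta : C, 0 < delta /\
        forall a : C, 0 < `|a| -> `|a| < delta ->
          forall (xi : C) (p : nat),
            xi != 0 -> root (gx q m a0 A a) xi -> mup xi (gx q m a0 A a) = p ->
            nroots_in_disk (gx q m a0 A a + hx h a) xi (eps * `|xi|) p.
Proof.
move=> a0n h_above.
have [d [R [amin [d0 d1 R0 amin0 conf]]]] := Aseq_configuration A.
exists (d / R); split=> [|eps eps0 eps_lt]; first exact: divr_gt0.
pose c : C := 264 * ((n + size h).+1)%:R ^+ 2.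
have c0 : 0 < c by rewrite mulr_gt0 ?exprn_gt0 ?ltr0n.
have [del [del0 del_amin del_dc]] := pos_min2 (mulr_gt0 eps0 amin0) (divr_gt0 d0 c0).
have hn0 : 0 < 2 * (hnorm h R + 1) by rewrite mulr_gt0 ?ltr_wpDl ?hnorm_ge0 ?ltW.
have a0del : 0 < `|a0| * del ^+ n by rewrite mulr_gt0 ?exprn_gt0 ?normr_gt0.
have [delta [delta0 delta1 delta_small]] := pos_min2 ltr01 (divr_gt0 a0del hn0).
exists delta; split=> // a a_pos a_delta xi p xi0 rxi <-.
have a_neq0 : a != 0 by rewrite -normr_gt0.
have [k Ak] := root_gx a0n a_neq0 rxi.
have [DA AkR Akmin] := conf k.
have Ak0 : A k != 0 by rewrite Ak mulf_neq0 ?expfz_neq0.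
rewrite mup_gx //; apply: (perturbed_root_count_small a0n h_above a_neq0
  (ltW (lt_le_trans a_delta delta1)) (d := d) (del := del) (R := R)); rewrite -?Ak //.
- exact: ltW.
- by rewrite -/c mulrC -ler_pdivlMr.
- by rewrite (le_trans del_amin) // ler_wpM2l ?(ltW eps0) ?Akmin.
- apply: (@lt_le_trans _ _ (d / R * `|A k|)); first by rewrite ltr_pM2r ?normr_gt0.
  rewrite mulrAC ler_pdivrMr // ler_wpM2l ?(ltW d0) //.
  by apply: le_trans AkR; rewrite lerDl.
- have := lt_le_trans a_delta delta_small; rewrite ltr_pdivlMr // => a_small.
  apply: le_lt_trans a_small.
  rewrite [leRHS](_ : _ = 2 * `|a| * hnorm h R + 2 * `|a|); last by ring.
  by rewrite lerDl mulr_ge0.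
Qed.
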